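(* Let $S=S(r_1,r_2,\ldots,r_k)$ be a starlike tree. Then: (1) if $r_i\geq 4$ for all $i$, then $GA(S)>ABC(S)$; (2) if $r_i\geq 2$ for all $i$ and $\frac{1}{k}\sum_{i=1}^{k}r_i\geq 4$, then $GA(S)>ABC(S)$; (3) if $\frac{1}{k}\sum_{i=1}^{k}r_i\geq 8$, then $GA(S)>ABC(S)$.
   Context: A starlike tree is a tree with exactly one vertex of degree greater than two. $S(r_1,\ldots,r_k)$ denotes the starlike tree having a vertex $v$ of degree $k>2$ such that deleting $v$ leaves the disjoint union of paths $P_{r_1}\cup\cdots\cup P_{r_k}$, where $P_r$ is the path on $r$ vertices and $r_1\geq r_2\geq\cdots\geq r_k\geq 1$ (so $S$ has $1+\sum r_i$ vertices). With $d_i$ the degree of vertex $v_i$, $GA(S)=\sum_{v_iv_j\in E(S)}\frac{2\sqrt{d_id_j}}{d_i+d_j}$ and $ABC(S)=\sum_{v_iv_j\in E(S)}\sqrt{\frac{d_i+d_j-2}{d_id_j}}$. *)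

From Stdlib Require Import Reals Lra Lia Arith List Sorted.
Import ListNotations.
Open Scope R_scope.

(* Vertices of the starlike tree S(r_1,...,r_k):
   None          = the central vertex v (of degree k),
   Some (i, j)   = the j-th vertex (1 <= j <= r_i) of the i-th branch (0-based i),
   the branch being the path  v - (i,1) - (i,2) - ... - (i,r_i). *)
Definition vertex := option (nat * nat).

Definition vertex_eqb (x y : vertex) : bool :=
  match x, y with
  | None, None => true
  | Some (a, b), Some (c, d) => andb (Nat.eqb a c) (Nat.eqb b d)
  | _, _ => false
  end.

Definition edge := (vertex * vertex)%type.

Definition branch_edges (i r : nat) : list edge :=
  (None, Some (i, 1%nat)) ::
  map (fun j => (Some (i, j), Some (i, S j))) (seq 1 (r - 1)).

Definition star_edges (rs : list nat) : list edge :=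
  concat (map (fun i => branch_edges i (nth i rs 0%nat)) (seq 0 (length rs))).

Definition degree (E : list edge) (v : vertex) : nat :=
  length (filter (fun e => orb (vertex_eqb (fst e) v) (vertex_eqb (snd e) v)) E).

Definition sum_edges (E : list edge) (f : R -> R -> R) : R :=
  fold_right (fun e acc => f (INR (degree E (fst e))) (INR (degree E (snd e))) + acc) 0 E.

Definition GA (E : list edge) : R :=
  sum_edges E (fun di dj => 2 * sqrt (di * dj) / (di + dj)).

Definition ABC (E : list edge) : R :=
  sum_edges E (fun di dj => sqrt ((di + dj - 2) / (di * dj))).

Definition sum_list_nat (rs : list nat) : nat := fold_right Nat.add 0%nat rs.

Example ex_deg : map (fun e => (degree (star_edges [2;1;1]%nat) (fst e), degree (star_edges [2;1;1]%nat) (snd e))) (star_edges [2;1;1]%nat) = [(3,2);(2,1);(3,1);(3,1)]%nat.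
Proof. reflexivity. Qed.

From Stdlib Require Import Reals Lra Lia Arith List Sorted.
Import ListNotations.
Open Scope R_scope.

(* Write k for the degree of the centre and phi(x, y) for the difference of the
   GA and ABC weights of an edge with end degrees x and y.  All non-central
   vertices have degree 1 or 2, so a branch of length r >= 2 contributes
   phi(k,2) + (r-2) phi(2,2) + phi(2,1) > 0.29 r - 1.06 to GA - ABC, and a
   branch of length 1 contributes phi(k,1) > -1.  Summing these affine lower
   bounds over the branches gives GA - ABC > 0 as soon as the mean branch
   length is at least 4 (all r_i >= 2) or at least 8 (no restriction); part
   (1) is a special case of part (2). *)

Fixpoint sumR {A} (F : A -> R) (l : list A) : R :=
  match l with [] => 0 | x :: t => F x + sumR F t end.

Lemma sumR_app {A} (F : A -> R) l1 l2 : sumR F (l1 ++ l2) = sumR F l1 + sumR F l2.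
Proof. induction l1 as [|x l1 IH]; simpl; [lra | rewrite IH; lra]. Qed.

Lemma sumR_map {A B} (F : B -> R) (g : A -> B) l :
  sumR F (map g l) = sumR (fun x => F (g x)) l.
Proof. induction l as [|x l IH]; simpl; [reflexivity | now rewrite IH]. Qed.

Lemma sumR_concat_map {A B} (F : B -> R) (G : A -> list B) l :
  sumR F (concat (map G l)) = sumR (fun x => sumR F (G x)) l.
Proof. induction l as [|x l IH]; simpl; [reflexivity | now rewrite sumR_app, IH]. Qed.

Lemma sumR_ext_in {A} (F G : A -> R) l :
  (forall x, In x l -> F x = G x) -> sumR F l = sumR G l.
Proof.
  induction l as [|x l IH]; simpl; intros H; [reflexivity|].
  rewrite H, IH; auto.
Qed.

Lemma sumR_const {A} (F : A -> R) l c :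
  (forall x, In x l -> F x = c) -> sumR F l = INR (length l) * c.
Proof.
  intros H. rewrite (sumR_ext_in F (fun _ => c)) by exact H.
  induction l as [|x l IH]; [simpl; lra|].
  rewrite length_cons, S_INR. simpl sumR. rewrite IH by (intros; apply H; now right). lra.
Qed.

Lemma sumR_lt {A} (F G : A -> R) l :
  l <> [] -> (forall x, In x l -> F x > G x) -> sumR F l > sumR G l.
Proof.
  induction l as [|x [|y l] IH]; intros Hl H; [congruence| |].
  - specialize (H x (or_introl eq_refl)). simpl. lra.
  - assert (sumR F (y :: l) > sumR G (y :: l))
      by (apply IH; [congruence | intros; apply H; now right]).
    specialize (H x (or_introl eq_refl)). simpl in *. lra.
Qed.

Lemma sumR_affine c t rs :
  sumR (fun r => c * (INR r - t)) rs = c * (INR (sum_list_nat rs) - t * INR (length rs)).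
Proof.
  induction rs as [|r rs IH]; [simpl; lra|].
  change (sum_list_nat (r :: rs)) with (r + sum_list_nat rs)%nat.
  simpl sumR. rewrite IH, plus_INR, length_cons, S_INR. ring.
Qed.

Ltac case_nat_tests :=
  repeat match goal with
  | |- context [Nat.leb ?x ?y] => destruct (Nat.leb_spec x y)
  | |- context [Nat.ltb ?x ?y] => destruct (Nat.ltb_spec x y)
  | |- context [Nat.eqb ?x ?y] => destruct (Nat.eqb_spec x y)
  end; cbn [andb orb length]; try lia.

Lemma list_sum_map_seq_single (G : nat -> nat) i a n :
  (forall j, j <> i -> G j = 0%nat) ->
  list_sum (map G (seq a n)) = if ((a <=? i) && (i <? a + n))%bool then G i else 0%nat.
Proof.
  intros HG. revert a; induction n as [|n IH]; intros a; simpl.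
  - case_nat_tests.
  - rewrite IH. destruct (Nat.eq_dec a i) as [Hai|Hai].
    + subst a. case_nat_tests.
    + rewrite (HG a Hai). case_nat_tests.
Qed.

Lemma map_nth_seq_length (rs : list nat) : map (fun i => nth i rs 0%nat) (seq 0 (length rs)) = rs.
Proof.
  induction rs as [|r rs IH]; simpl; [reflexivity|]. f_equal.
  now rewrite <- seq_shift, map_map.
Qed.

Definition incident (v : vertex) (e : edge) : bool :=
  vertex_eqb (fst e) v || vertex_eqb (snd e) v.

Definition path_edges (i a n : nat) : list edge :=
  map (fun j => (Some (i, j), Some (i, S j))) (seq a n).

Lemma degree_star_edges rs v :
  degree (star_edges rs) v =
  list_sum (map (fun i => length (filter (incident v) (branch_edges i (nth i rs 0%nat))))
                (seq 0 (length rs))).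
Proof.
  unfold degree, star_edges. fold (incident v).
  now rewrite <- concat_filter_map, length_concat, !map_map.
Qed.

Lemma incident_centre_path_edges i a n :
  filter (incident None) (path_edges i a n) = [].
Proof. unfold path_edges. now induction (seq a n). Qed.

Lemma incident_other_path_edges i i' j a n :
  i' <> i -> filter (incident (Some (i, j))) (path_edges i' a n) = [].
Proof.
  intros Hi. apply Nat.eqb_neq in Hi. unfold path_edges.
  induction (seq a n) as [|x l IH]; simpl; [reflexivity|].
  unfold incident at 1; simpl. now rewrite Hi.
Qed.

(* Vertex (i, j) is the left end of the edge starting at j and the right end of
   the edge starting at j - 1. *)
Lemma count_incident_path_edges i j a n :
  length (filter (incident (Some (i, j))) (path_edges i a n)) =
  ((if ((a <=? j) && (j <? a + n))%bool then 1 else 0) +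
   (if ((a <? j) && (j <=? a + n))%bool then 1 else 0))%nat.
Proof.
  unfold path_edges. revert a; induction n as [|n IH]; intros a; cbn [seq map filter].
  - case_nat_tests.
  - unfold incident at 1; cbn [vertex_eqb fst snd]. rewrite Nat.eqb_refl. cbn [andb].
    destruct (Nat.eqb_spec a j), (Nat.eqb_spec (S a) j); cbn [orb length];
      rewrite IH; case_nat_tests.
Qed.

Lemma branch_edges_path i r : branch_edges i r = (None, Some (i, 1%nat)) :: path_edges i 1 (r - 1).
Proof. reflexivity. Qed.

Lemma count_incident_centre_branch i r :
  length (filter (incident None) (branch_edges i r)) = 1%nat.
Proof. rewrite branch_edges_path. simpl. now rewrite incident_centre_path_edges. Qed.

Lemma degree_centre rs : degree (star_edges rs) None = length rs.
Proof.
  rewrite degree_star_edges.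
  rewrite (map_ext _ (fun _ => 1%nat)) by (intros; apply count_incident_centre_branch).
  rewrite map_const, length_seq.
  generalize (length rs); intros n; induction n as [|n IH]; simpl; lia.
Qed.

Lemma count_incident_branch i j r : (1 <= j <= r)%nat ->
  length (filter (incident (Some (i, j))) (branch_edges i r)) = if j <? r then 2%nat else 1%nat.
Proof.
  intros Hj. rewrite branch_edges_path. cbn [filter].
  unfold incident at 1; cbn [vertex_eqb fst snd orb]. rewrite Nat.eqb_refl. cbn [andb].
  fold (incident (Some (i, j))).
  destruct (Nat.eqb_spec 1 j); cbn [length]; rewrite count_incident_path_edges; case_nat_tests.
Qed.

Lemma degree_branch rs i j : (i < length rs)%nat -> (1 <= j <= nth i rs 0%nat)%nat ->
  degree (star_edges rs) (Some (i, j)) = if j <? nth i rs 0%nat then 2%nat else 1%nat.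
Proof.
  intros Hi Hj. rewrite degree_star_edges, (list_sum_map_seq_single _ i).
  - rewrite count_incident_branch by exact Hj. case_nat_tests.
  - intros i' Hi'. rewrite branch_edges_path. cbn [filter]. unfold incident at 1; simpl.
    now rewrite (proj2 (Nat.eqb_neq i' i) Hi'), incident_other_path_edges.
Qed.

Definition phi (x y : R) : R := 2 * sqrt (x * y) / (x + y) - sqrt ((x + y - 2) / (x * y)).

Definition edge_phi (E : list edge) (e : edge) : R :=
  phi (INR (degree E (fst e))) (INR (degree E (snd e))).

Lemma GA_minus_ABC E : GA E - ABC E = sumR (edge_phi E) E.
Proof.
  unfold GA, ABC, sum_edges, edge_phi, phi. generalize (degree E); intros D.
  induction E as [|e E IH]; simpl; [lra | rewrite <- IH; lra].
Qed.

Definition branch_value (k : R) (r : nat) : R :=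
  match r with
  | S (S m) => phi k 2 + INR m * phi 2 2 + phi 2 1
  | _ => phi k 1
  end.

Lemma INR_2 : INR 2 = 2.
Proof. simpl; lra. Qed.

Lemma sum_edge_phi_branch rs i : (i < length rs)%nat -> (1 <= nth i rs 0%nat)%nat ->
  sumR (edge_phi (star_edges rs)) (branch_edges i (nth i rs 0%nat)) =
  branch_value (INR (length rs)) (nth i rs 0%nat).
Proof.
  intros Hi Hr. rewrite branch_edges_path. unfold edge_phi at 1. cbn [sumR fst snd].
  rewrite degree_centre, degree_branch by lia.
  destruct (nth i rs 0%nat) as [|[|m]] eqn:Er; [lia | simpl; lra |].
  replace (S (S m) - 1)%nat with (S m) by lia.
  unfold path_edges. rewrite seq_S, map_app, sumR_app, (sumR_const _ _ (phi 2 2)).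
  - rewrite length_map, length_seq. unfold edge_phi; cbn [map sumR fst snd].
    rewrite !degree_branch; [rewrite Er | rewrite ?Er; lia ..].
    case_nat_tests. rewrite INR_2, INR_1. simpl. lra.
  - intros e He. apply in_map_iff in He as [x [<- Hx]]. apply in_seq in Hx.
    unfold edge_phi; cbn [fst snd]. rewrite !degree_branch; [rewrite Er | rewrite ?Er; lia ..].
    case_nat_tests. now rewrite INR_2.
Qed.

Lemma GA_minus_ABC_star rs : Forall (fun r => (1 <= r)%nat) rs ->
  GA (star_edges rs) - ABC (star_edges rs) = sumR (branch_value (INR (length rs))) rs.
Proof.
  intros Hrs. rewrite Forall_forall in Hrs.
  rewrite GA_minus_ABC. unfold star_edges at 2. rewrite sumR_concat_map.
  rewrite (sumR_ext_in _ (fun i => branch_value (INR (length rs)) (nth i rs 0%nat))).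
  - now rewrite <- sumR_map, map_nth_seq_length.
  - intros i Hi. apply in_seq in Hi.
    apply sum_edge_phi_branch; [lia | apply Hrs, nth_In; lia].
Qed.

Lemma sqrt_lt_of_lt_sqr x a : 0 <= x -> 0 <= a -> x < a * a -> sqrt x < a.
Proof. intros Hx Ha H. rewrite <- (sqrt_square a Ha). now apply sqrt_lt_1_alt. Qed.

Lemma lt_sqrt_of_sqr_lt x a : 0 <= a -> a * a < x -> a < sqrt x.
Proof.
  intros Ha H. rewrite <- (sqrt_square a Ha).
  apply sqrt_lt_1_alt. split; [now apply Rmult_le_pos | exact H].
Qed.

Lemma phi_2_2 : phi 2 2 = 1 - sqrt (1 / 2).
Proof.
  unfold phi. rewrite sqrt_square by lra.
  replace ((2 + 2 - 2) / (2 * 2)) with (1 / 2) by field. field.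
Qed.

Lemma phi_2_1 : phi 2 1 = 2 * sqrt 2 / 3 - sqrt (1 / 2).
Proof.
  unfold phi. replace ((2 + 1 - 2) / (2 * 1)) with (1 / 2) by field.
  replace (2 * 1) with 2 by ring. replace (2 + 1) with 3 by ring. reflexivity.
Qed.

Lemma phi_gt_2 k : 0 < k -> phi k 2 > - sqrt (1 / 2).
Proof.
  intros Hk. unfold phi. replace ((k + 2 - 2) / (k * 2)) with (1 / 2) by (field; lra).
  assert (0 < sqrt (k * 2)) by (apply sqrt_lt_R0; lra).
  assert (0 < 2 * sqrt (k * 2) / (k + 2)) by (apply Rdiv_lt_0_compat; lra).
  lra.
Qed.

Lemma phi_gt_1 k : 1 <= k -> phi k 1 > -1.
Proof.
  intros Hk. unfold phi. rewrite Rmult_1_r.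
  assert (0 < 2 * sqrt k / (k + 1)) by (apply Rdiv_lt_0_compat; [apply Rmult_lt_0_compat, sqrt_lt_R0 |]; lra).
  assert (sqrt ((k + 1 - 2) / k) < 1).
  { replace ((k + 1 - 2) / k) with (1 - / k) by (field; lra).
    assert (0 < / k) by (apply Rinv_0_lt_compat; lra).
    assert (/ k <= 1) by (rewrite <- Rinv_1; apply Rinv_le_contravar; lra).
    apply sqrt_lt_of_lt_sqr; lra. }
  lra.
Qed.

Lemma branch_value_gt_affine k r : 0 < k -> (2 <= r)%nat -> branch_value k r > 0.29 * INR r - 1.06.
Proof.
  intros Hk Hr. destruct r as [|[|m]]; [lia | lia |].
  assert (Hu : sqrt (1 / 2) < 0.71) by (apply sqrt_lt_of_lt_sqr; lra).
  assert (H2 : 1.41 < sqrt 2) by (apply lt_sqrt_of_sqr_lt; lra).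
  assert (Hm : 0 <= INR m) by apply pos_INR.
  pose proof (phi_gt_2 k Hk).
  simpl branch_value. rewrite phi_2_2, phi_2_1, !S_INR. nra.
Qed.

Lemma GA_gt_ABC_of_affine_branch_bound rs c t :
  rs <> [] -> Forall (fun r => (1 <= r)%nat) rs -> 0 <= c ->
  t * INR (length rs) <= INR (sum_list_nat rs) ->
  (forall r, In r rs -> branch_value (INR (length rs)) r > c * (INR r - t)) ->
  GA (star_edges rs) > ABC (star_edges rs).
Proof.
  intros Hne Hrs Hc Hmean Hbound.
  assert (Hlt : sumR (branch_value (INR (length rs))) rs > sumR (fun r => c * (INR r - t)) rs)
    by (apply sumR_lt; assumption).
  rewrite sumR_affine in Hlt. rewrite <- GA_minus_ABC_star in Hlt by exact Hrs.
  assert (0 <= c * (INR (sum_list_nat rs) - t * INR (length rs))) by (apply Rmult_le_pos; lra).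
  lra.
Qed.

Lemma mul_length_le_of_mean_ge rs t : rs <> [] ->
  INR (sum_list_nat rs) / INR (length rs) >= t -> t * INR (length rs) <= INR (sum_list_nat rs).
Proof.
  intros Hne Hmean.
  assert (0 < INR (length rs)) by (apply lt_0_INR; destruct rs; [congruence | simpl; lia]).
  apply Rge_le in Hmean. apply Rmult_le_compat_r with (r := INR (length rs)) in Hmean; [|lra].
  unfold Rdiv in Hmean. rewrite Rmult_assoc, Rinv_l in Hmean; lra.
Qed.

Lemma mul_length_le_sum_list_nat m rs :
  Forall (fun r => (m <= r)%nat) rs -> (m * length rs <= sum_list_nat rs)%nat.
Proof. induction 1 as [|r rs Hr _ IH]; simpl; lia. Qed.

Theorem theorem3p9 (rs : list nat) :
  (2 < length rs)%nat ->
  Sorted (fun a b => (b <= a)%nat) rs ->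
  Forall (fun r => (1 <= r)%nat) rs ->
  (Forall (fun r => (4 <= r)%nat) rs ->
     GA (star_edges rs) > ABC (star_edges rs)) /\
  (Forall (fun r => (2 <= r)%nat) rs ->
     INR (sum_list_nat rs) / INR (length rs) >= 4 ->
     GA (star_edges rs) > ABC (star_edges rs)) /\
  (INR (sum_list_nat rs) / INR (length rs) >= 8 ->
     GA (star_edges rs) > ABC (star_edges rs)).
Proof.
  intros Hk _ Hrs.
  assert (Hne : rs <> []) by (intros ->; simpl in Hk; lia).
  assert (Hk1 : 1 <= INR (length rs)) by (apply (le_INR 1); lia).
  assert (Hrs1 : forall r, In r rs -> (1 <= r)%nat) by now apply Forall_forall.
  assert (mean_ge_4_case : Forall (fun r => (2 <= r)%nat) rs ->
            4 * INR (length rs) <= INR (sum_list_nat rs) -> GA (star_edges rs) > ABC (star_edges rs)).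
  { intros H2 Hmean. apply (GA_gt_ABC_of_affine_branch_bound rs 0.29 4); auto; [lra|].
    intros r Hr. rewrite Forall_forall in H2.
    pose proof (branch_value_gt_affine (INR (length rs)) r ltac:(lra) (H2 r Hr)). lra. }
  split; [|split].
  - intros H4. apply mean_ge_4_case; [eapply Forall_impl; [|exact H4]; simpl; lia |].
    replace 4 with (INR 4) by (simpl; lra). rewrite <- mult_INR.
    apply le_INR, mul_length_le_sum_list_nat, H4.
  - intros H2 Hmean. now apply mean_ge_4_case, mul_length_le_of_mean_ge.
  - intros Hmean. apply (GA_gt_ABC_of_affine_branch_bound rs 0.29 8); auto;
      [lra | now apply mul_length_le_of_mean_ge |].
    intros r Hr. destruct (Nat.eq_dec r 1) as [->|Hr1].
    + pose proof (phi_gt_1 _ Hk1). cbn [branch_value]. rewrite INR_1. lra.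
    + assert (Hr2 : (2 <= r)%nat) by (specialize (Hrs1 r Hr); lia).
      pose proof (branch_value_gt_affine (INR (length rs)) r ltac:(lra) Hr2). lra.
Qed.
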